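(* Assume that the pair $(\mathcal P,\mathcal P')$ gives $(G,N,\theta)_{\mathcal H}\ge_c(H,M,\varphi)_{\mathcal H}$. Let $U\le\mathbb C^\times$ be the group of roots of unity. If $\epsilon:G_\theta\to U$ is any map that is constant on $N$-cosets and satisfies $\epsilon(1)=1$, then the pair $(\epsilon\mathcal P,\epsilon_{H_\theta}\mathcal P')$ also gives $(G,N,\theta)_{\mathcal H}\ge_c(H,M,\varphi)_{\mathcal H}$, where $(\epsilon\mathcal P)(x)=\epsilon(x)\mathcal P(x)$ and $\epsilon_{H_\theta}$ is the restriction of $\epsilon$ to $H_\theta$.
   Context: All groups are finite; $p$ is a fixed prime. $\mathbb Q^{\mathrm{ab}}\subseteq\mathbb C$ is generated by all roots of unity, $\mathcal G=\mathrm{Gal}(\mathbb Q^{\mathrm{ab}}/\mathbb Q)$, $\mathcal H\le\mathcal G$ consists of those $\sigma$ for which there is an integer $f$ with $\sigma(\xi)=\xi^{p^f}$ for all roots of unity $\xi$ of order prime to $p$. For $N\trianglelefteq G$, $\theta\in\mathrm{Irr}(N)$, $g\in G$, $\sigma\in\mathcal G$: $\theta^{g\sigma}(n)=\sigma(\theta(gng^{-1}))$; $A_\theta$ the stabilizer in $A\le G\times\mathcal G$; $\theta^{\mathcal H}$ the $\mathcal H$-orbit; $G_{\theta^{\mathcal H}}=\{g:\theta^g\in\theta^{\mathcal H}\}$. $(G,N,\theta)_{\mathcal H}$ is an $\mathcal H$-triple if $N\trianglelefteq G$, $\theta\in\mathrm{Irr}(N)$, $G_{\theta^{\mathcal H}}=G$.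 Projective representation $\mathcal P$ with factor set $\alpha$: $\mathcal P(x)\mathcal P(y)=\alpha(x,y)\mathcal P(xy)$. For $G$-invariant $\theta$, $\mathcal P$ is associated with $\theta$ if $\mathcal P_N$ affords $\theta$ and $\mathcal P(ng)=\mathcal P(n)\mathcal P(g)$, $\mathcal P(gn)=\mathcal P(g)\mathcal P(n)$. $\mathcal Q\sim\mu\mathcal P$ means $\mathcal Q(x)=\mu(x)M^{-1}\mathcal P(x)M$ for fixed invertible $M$. For $\mathcal P$ associated with $\theta$ on $G_\theta$ with entries in $\mathbb Q^{\mathrm{ab}}$ and $\theta^{x\sigma}=\theta$: $\mathcal P^{x\sigma}(y)=\sigma(\mathcal P(xyx^{-1}))$, and $\mu_{x\sigma}$ is the unique function $G_\theta\to\mathbb C^\times$, constant on $N$-cosets, $\mu_{x\sigma}(1)=1$, with $\mathcal P^{x\sigma}\sim\mu_{x\sigma}\mathcal P$. For $\mathcal H$-triples with $H\le G$, the pair $(\mathcal P,\mathcal P')$ gives $(G,N,\theta)_{\mathcal H}\ge_c(H,M,\varphi)_{\mathcal H}$ if: (i) $G=NH$, $N\cap H=M$, $\mathbf C_G(N)\subseteq H$; (ii) $(H\times\mathcal H)_\theta=(H\times\mathcal H)_\varphi$; (iii) $\mathcal P$ is a projective representation of $G_\theta$ associated with $\theta$ and $\mathcal P'$ one of $H_\varphi$ associated with $\varphi$, entries in $\mathbb Q^{\mathrm{ab}}$, factor sets with root-of-unity values agreeing on $H_\theta\times H_\theta$, and $\mathcal P(c),\mathcal P'(c)$ the same scalar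 for all $c\in\mathbf C_G(N)$; (iv) $\mu_a=\mu'_a$ on $H_\theta$ for all $a\in(H\times\mathcal H)_\theta$ (with $\mu_a$, $\mu'_a$ computed from $\mathcal P$, $\mathcal P'$). *)

From HB Require Import structures.
From mathcomp Require Import all_boot all_order all_algebra.
From mathcomp Require Import all_fingroup all_solvable all_field all_character.
From Stdlib Require Import ClassicalEpsilon.
Set Implicit Arguments. Unset Strict Implicit. Unset Printing Implicit Defensive.
Import Order.TTheory GRing.Theory Num.Theory.
Local Open Scope ring_scope.

(* Complex numbers are modelled by the algebraic numbers algC (all character
   values and all entries in Q^ab are algebraic).  An element sigma of
   Gal(Q^ab/Q) is represented by a ring automorphism of algC (every such
   automorphism extends one of Q^ab and every one of Q^ab is obtained so);
   only its restriction to Q^ab is ever used. *)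

Definition rootOfUnity (z : algC) : Prop := exists2 n : nat, (0 < n)%N & z ^+ n = 1.

Definition in_Qab (z : algC) : Prop :=
  exists n (zeta : algC) (q : {poly rat}),
    [/\ (0 < n)%N, n.-primitive_root zeta & z = (map_poly ratr q).[zeta]].

(* sigma belongs to the subgroup \mathcal H (for the prime p): there is an
   integer f with sigma(xi) = xi^(p^f) for all roots of unity xi of order
   prime to p.  f >= 0 is the first disjunct; f = -e < 0 means
   sigma(xi)^(p^e) = xi. *)
Definition in_calH (p : nat) (sigma : {rmorphism algC -> algC}) : Prop :=
  exists e : nat,
    (forall (xi : algC) (n : nat), (0 < n)%N -> coprime n p -> xi ^+ n = 1 ->
       sigma xi = xi ^+ (p ^ e)) \/
    (forall (xi : algC) (n : nat), (0 < n)%N -> coprime n p -> xi ^+ n = 1 ->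
       (sigma xi) ^+ (p ^ e) = xi).

(* theta^{g sigma}(n) = sigma(theta(g n g^-1)) *)
Definition cfact (gT : finGroupType) (N : {group gT}) (theta : 'CF(N)) (g : gT)
  (sigma : {rmorphism algC -> algC}) : 'CF(N) := cfAut sigma (theta ^ g)%CF.

Definition Htriple (p : nat) (gT : finGroupType) (G N : {group gT}) (theta : 'CF(N)) : Prop :=
  [/\ (N <| G)%g, theta \in irr N &
      forall g, g \in G -> exists2 sigma, in_calH p sigma & (theta ^ g)%CF = cfAut sigma theta].

Definition factor_set (gT : finGroupType) (d : nat) (D : {set gT})
  (P : gT -> 'M[algC]_d) (alpha : gT -> gT -> algC) : Prop :=
  forall x y, x \in D -> y \in D -> P x *m P y = alpha x y *: P (x * y)%g.

Definition proj_rep (gT : finGroupType) (d : nat) (D : {set gT}) (P : gT -> 'M[algC]_d) : Prop :=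
  (forall x, x \in D -> P x \in unitmx) /\ exists alpha, factor_set D P alpha.

Definition proj_assoc (gT : finGroupType) (d : nat) (D : {set gT}) (N : {group gT})
  (theta : 'CF(N)) (P : gT -> 'M[algC]_d) : Prop :=
  [/\ proj_rep D P,
      (forall n m, n \in N -> m \in N -> P (n * m)%g = P n *m P m),
      (forall n, n \in N -> \tr (P n) = theta n),
      (forall n g, n \in N -> g \in D -> P (n * g)%g = P n *m P g) &
      (forall n g, n \in N -> g \in D -> P (g * n)%g = P g *m P n)].

Definition is_mu (gT : finGroupType) (d : nat) (D : {set gT}) (N : {group gT})
  (P : gT -> 'M[algC]_d) (x : gT) (sigma : {rmorphism algC -> algC}) (mu : gT -> algC) : Prop :=
  [/\ mu 1%g = 1,
      (forall y n, y \in D -> n \in N -> mu (n * y)%g = mu y),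
      (forall y, y \in D -> mu y != 0) &
      exists2 Mx : 'M[algC]_d, Mx \in unitmx &
        forall y, y \in D ->
          map_mx sigma (P (x * y * x^-1)%g) = mu y *: (invmx Mx *m P y *m Mx)].

(* mu_{x sigma}: THE function with the above properties (unique by the paper) *)
Definition mu_of (gT : finGroupType) (d : nat) (D : {set gT}) (N : {group gT})
  (P : gT -> 'M[algC]_d) (x : gT) (sigma : {rmorphism algC -> algC}) : gT -> algC :=
  epsilon (inhabits (fun _ => 1)) (is_mu D N P x sigma).

Definition ge_c (p : nat) (gT : finGroupType) (G N : {group gT}) (theta : 'CF(N))
  (H M : {group gT}) (phi : 'CF(M)) (d d' : nat)
  (P : gT -> 'M[algC]_d) (P' : gT -> 'M[algC]_d') : Prop :=
  [/\ [/\ Htriple p G theta, Htriple p H phi & H \subset G],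
      [/\ (N * H)%g = G, (N :&: H)%g = M & ('C_G(N) \subset H)%g],
      (forall h sigma, h \in H -> in_calH p sigma ->
         (cfact theta h sigma = theta <-> cfact phi h sigma = phi)),
      [/\ proj_assoc ('I_G[theta])%g theta P /\ proj_assoc ('I_H[phi])%g phi P',
          (forall x i j, x \in ('I_G[theta])%g -> in_Qab (P x i j)) /\
          (forall x i j, x \in ('I_H[phi])%g -> in_Qab (P' x i j)),
          (exists alpha alpha',
             [/\ factor_set ('I_G[theta])%g P alpha, factor_set ('I_H[phi])%g P' alpha',
                 (forall x y, x \in ('I_G[theta])%g -> y \in ('I_G[theta])%g -> rootOfUnity (alpha x y)),
                 (forall x y, x \in ('I_H[phi])%g -> y \in ('I_H[phi])%g -> rootOfUnity (alpha' x y)) &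
                 (forall x y, x \in ('I_H[theta])%g -> y \in ('I_H[theta])%g -> alpha x y = alpha' x y)]) &
          (forall c, c \in ('C_G(N))%g -> exists lambda : algC,
             P c = lambda%:M /\ P' c = lambda%:M)] &
      (forall h sigma, h \in H -> in_calH p sigma -> cfact theta h sigma = theta ->
         {in ('I_H[theta])%g, mu_of ('I_G[theta])%g N P h sigma =1 mu_of ('I_H[phi])%g M P' h sigma})].

From mathcomp Require Import all_boot all_order all_algebra.
From mathcomp Require Import all_fingroup all_solvable all_field all_character.
From Stdlib Require Import ClassicalEpsilon.
Set Implicit Arguments. Unset Strict Implicit. Unset Printing Implicit Defensive.
Import GRing.Theory Num.Theory.
Local Open Scope ring_scope.

(* Multiplying P by eps multiplies its factor set by the coboundary
   eps x eps y / eps (x y), which is root-of-unity valued and is the same for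
   P and P' on H_theta.  As eps is trivial on N and constant on N-cosets, eps P
   is still associated with theta.  Since theta is irreducible, Schur's lemma
   shows that two projective representations associated with theta differ, up
   to similarity, by a unique scalar function; so mu_{x sigma} is well defined,
   and the one of eps P is y |-> mu_{x sigma}(y) sigma(eps(x y x^-1)) / eps(y).
   The mu-functions of eps P and eps P' are thus obtained from the old ones by
   the same factor and still agree on H_theta. *)

Lemma rootOfUnityM a b : rootOfUnity a -> rootOfUnity b -> rootOfUnity (a * b).
Proof.
case=> m m_gt0 am [n n_gt0 bn]; exists (m * n)%N; first by rewrite muln_gt0 m_gt0.
by rewrite exprMn {2}mulnC !exprM am bn !expr1n mulr1.
Qed.

Lemma rootOfUnityV a : rootOfUnity a -> rootOfUnity a^-1.
Proof. by case=> m m_gt0 am; exists m => //; rewrite exprVn am invr1. Qed.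

Lemma rootOfUnity_neq0 a : rootOfUnity a -> a != 0.
Proof. by case=> m m_gt0 am; move: (oner_neq0 algC); rewrite -am expf_eq0 m_gt0. Qed.

(* If z^k = 1 and w = q(zeta) with zeta of order n, then z w is a polynomial
   in a primitive (k n)-th root of unity. *)
Lemma in_Qab_rootM z w : rootOfUnity z -> in_Qab w -> in_Qab (z * w).
Proof.
case=> k k_gt0 zk [n [zeta [q [n_gt0 zeta_prim ->]]]].
have kn_gt0 : (0 < k * n)%N by rewrite muln_gt0 k_gt0.
have [om om_prim] := C_prim_root_exists kn_gt0.
have omk_prim : n.-primitive_root (om ^+ k).
  by have := dvdn_prim_root om_prim (dvdn_mull k (dvdnn n)); rewrite mulnK.
have omn_prim : k.-primitive_root (om ^+ n).
  by have := dvdn_prim_root om_prim (dvdn_mulr n (dvdnn k)); rewrite mulKn.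
have [[i _] /= zeta_i] := prim_rootP omk_prim (prim_expr_order zeta_prim).
have [[j _] /= z_j] := prim_rootP omn_prim zk.
exists (k * n)%N, om, ('X^(n * j) * (q \Po 'X^(k * i))); split => //.
rewrite rmorphM /= map_polyXn map_comp_poly map_polyXn hornerM hornerXn.
by rewrite horner_comp hornerXn z_j zeta_i !exprM.
Qed.

Lemma unitmx_neq0 (R : comUnitRingType) n (A : 'M[R]_n) :
  (0 < n)%N -> A \in unitmx -> A != 0.
Proof. by case: n A => // n A _; apply: contraL => /eqP->; rewrite unitmxE det0 unitr0. Qed.

Lemma scalemx_injl (F : fieldType) m n (A : 'M[F]_(m, n)) (a b : F) :
  A != 0 -> a *: A = b *: A -> a = b.
Proof.
move=> nzA /eqP; rewrite -subr_eq0 -scalerBl scalemx_eq0 (negbTE nzA) orbF.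
by rewrite subr_eq0 => /eqP.
Qed.

Lemma lcoset_const_onN (gT : finGroupType) (D N : {group gT}) (T : Type)
    (f : gT -> T) :
  (forall y n, y \in D -> n \in N -> f (n * y)%g = f y) ->
  {in N, forall n, f n = f 1%g}.
Proof. by move=> fN n Nn; rewrite -{1}(mulg1 n) fN. Qed.

Lemma inertia_cfAut (gT : finGroupType) (L : {group gT}) (phi : 'CF(L))
    (s : {rmorphism algC -> algC}) :
  'I[cfAut s phi]%g = 'I[phi]%g.
Proof. by apply/setP => z; rewrite !inE -cfAutConjg (inj_eq (cfAut_inj s)). Qed.

Lemma cfact_norm_Inertia (gT : finGroupType) (K L : {group gT}) (phi : 'CF(L)) h s :
  h \in K -> h \in 'N(L)%g -> cfact phi h s = phi -> h \in 'N('I_K[phi])%g.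
Proof.
rewrite /cfact => Kh nLh phi_h; apply/normP.
by rewrite conjIg conjGid // conjg_inertia // -(inertia_cfAut _ s) phi_h.
Qed.

Definition mxact (gT : finGroupType) (d : nat) (P : gT -> 'M[algC]_d) (x : gT)
  (s : {rmorphism algC -> algC}) : gT -> 'M[algC]_d :=
  fun y => map_mx s (P (x * y * x^-1)%g).

Definition scalar_similar (gT : finGroupType) (d : nat) (D : {set gT})
  (Q P : gT -> 'M[algC]_d) (mu : gT -> algC) : Prop :=
  exists2 B : 'M[algC]_d, B \in unitmx &
    forall y, y \in D -> Q y = mu y *: (invmx B *m P y *m B).

Section AssociatedProjectiveRepresentations.

Variables (gT : finGroupType) (d : nat) (D N : {group gT}) (theta : 'CF(N)).
Implicit Types (P Q : gT -> 'M[algC]_d).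

Lemma proj_assoc_unit P : proj_assoc D theta P -> {in D, forall x, P x \in unitmx}.
Proof. by case=> [[]]. Qed.

Lemma proj_assoc1 P : proj_assoc D theta P -> P 1%g = 1%:M.
Proof.
move=> PA; have [_ PM _ _ _] := PA.
have P1_unit := proj_assoc_unit PA (group1 D).
have := PM 1%g 1%g (group1 N) (group1 N); rewrite mulg1 => P1M.
by rewrite -(mulVmx P1_unit) {3}P1M mulKmx.
Qed.

Lemma proj_assoc_repr P : proj_assoc D theta P -> mx_repr N P.
Proof. by move=> PA; split; [exact: proj_assoc1 PA | case: PA]. Qed.

Lemma cfRepr_proj_assoc P (PA : proj_assoc D theta P) :
  cfRepr (MxRepresentation (proj_assoc_repr PA)) = theta.
Proof.
have [_ _ PT _ _] := PA.
by apply/cfun_inP => n Nn; rewrite cfunE Nn mulr1n PT.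
Qed.

Lemma proj_assoc_rsim P Q : proj_assoc D theta P -> proj_assoc D theta Q ->
  exists2 B, B \in unitmx & {in N, forall n, P n *m B = B *m Q n}.
Proof.
move=> PA QA; have /cfRepr_inj[B _ B_free PB] :
  cfRepr (MxRepresentation (proj_assoc_repr PA)) =
  cfRepr (MxRepresentation (proj_assoc_repr QA)) by rewrite !cfRepr_proj_assoc.
by exists B; first rewrite -row_free_unit.
Qed.

Lemma proj_assoc_conjmx P B : B \in unitmx -> proj_assoc D theta P ->
  proj_assoc D theta (fun x => B *m P x *m invmx B).
Proof.
move=> B_unit [[PU [alpha fs]] PM PT PNl PNr]; split.
- split=> [x Dx|]; first by rewrite !unitmx_mul PU ?B_unit ?unitmx_inv.
  exists alpha => x y Dx Dy.
  by rewrite scalemxAl scalemxAr -fs // !mulmxA mulmxKV.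
- by move=> n m Nn Nm; rewrite PM // !mulmxA mulmxKV.
- by move=> n Nn; rewrite mxtrace_mulC mulmxA mulVmx // mul1mx PT.
- by move=> n g Nn Dg; rewrite PNl // !mulmxA mulmxKV.
- by move=> n g Nn Dg; rewrite PNr // !mulmxA mulmxKV.
Qed.

Lemma proj_assoc_mxact P x s :
  proj_assoc D theta P -> x \in 'N(N)%g -> x \in 'N(D)%g ->
  cfact theta x s = theta -> proj_assoc D theta (mxact P x s).
Proof.
move=> [[PU [alpha fs]] PM PT PNl PNr] nNx nDx theta_x.
have cE y : (x * y * x^-1 = y ^ x^-1)%g by rewrite conjgE invgK mulgA.
have cD y : y \in D -> (x * y * x^-1)%g \in D by rewrite cE memJ_norm ?groupV.
have cN n : n \in N -> (x * n * x^-1)%g \in N by rewrite cE memJ_norm ?groupV.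
have cM y z : (x * (y * z) * x^-1 = (x * y * x^-1) * (x * z * x^-1))%g.
  by rewrite !cE conjMg.
rewrite /mxact; split.
- split=> [y Dy|]; first by rewrite map_unitmx PU ?cD.
  exists (fun y z => s (alpha (x * y * x^-1) (x * z * x^-1))%g) => y z Dy Dz.
  by rewrite -map_mxM fs ?cD // map_mxZ cM.
- by move=> n m Nn Nm; rewrite cM PM ?cN // map_mxM.
- move=> n Nn; have -> : theta n = cfact theta x s n by rewrite theta_x.
  by rewrite cfunE cfConjgE // -cE trace_map_mx PT ?cN.
- by move=> n y Nn Dy; rewrite cM PNl ?cN ?cD // map_mxM.
- by move=> n y Nn Dy; rewrite cM PNr ?cN ?cD // map_mxM.
Qed.

Hypotheses (sND : N \subset D) (nND : D \subset 'N(N)%g) (theta_irr : theta \in irr N).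

Variables (P : gT -> 'M[algC]_d) (PA : proj_assoc D theta P).

Lemma proj_assoc_irr : mx_irreducible (MxRepresentation (proj_assoc_repr PA)).
Proof.
case/irr_reprP: theta_irr => rG rG_irr rG_theta.
apply: mx_rsim_irr rG_irr; apply/cfRepr_rsimP.
by rewrite cfRepr_proj_assoc -rG_theta.
Qed.

Lemma proj_assoc_dim_gt0 : (0 < d)%N.
Proof. by case/mx_irrP: proj_assoc_irr. Qed.

Lemma proj_assoc_cent_scalar A :
  {in N, forall n, A *m P n = P n *m A} -> exists a, A = a%:M.
Proof.
move=> cA; apply/is_scalar_mxP.
apply: (mx_abs_irr_cent_scalar (group_closure_closed_field proj_assoc_irr)).
by apply/centgmxP => n Nn; apply: cA.
Qed.

(* P y P (m ^ y) = P m P y, likewise for Q, and Q = P at m and m ^ y. *)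
Lemma proj_assoc_ratio_cent Q y : proj_assoc D theta Q -> {in N, Q =1 P} ->
  y \in D -> {in N, forall m, Q y *m invmx (P y) *m P m = P m *m (Q y *m invmx (P y))}.
Proof.
move=> [_ _ _ QNl QNr] QP Dy m Nm; have [_ _ _ PNl PNr] := PA.
have Py_unit := proj_assoc_unit PA Dy.
have Nmy : (m ^ y)%g \in N by rewrite memJ_norm ?(subsetP nND).
have Pmy : P y *m P (m ^ y)%g = P m *m P y.
  by rewrite -PNr // -conjgC PNl.
have PyV : invmx (P y) *m P m = P (m ^ y)%g *m invmx (P y).
  by rewrite -[P m](mulmxK Py_unit) -Pmy !mulmxA mulVmx // mul1mx.
by rewrite -mulmxA PyV !mulmxA -(QP _ Nmy) -QNr // -conjgC QNl // (QP _ Nm).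
Qed.

Lemma proj_assoc_scalar_multiple Q : proj_assoc D theta Q -> {in N, Q =1 P} ->
  exists mu : gT -> algC,
    [/\ mu 1%g = 1, forall y n, y \in D -> n \in N -> mu (n * y)%g = mu y,
        {in D, forall y, mu y != 0} & {in D, forall y, Q y = mu y *: P y}].
Proof.
move=> QA QP; have [_ _ _ QNl _] := QA; have [_ _ _ PNl _] := PA.
have nz_unit A := @unitmx_neq0 algC d A proj_assoc_dim_gt0.
have d_neq0 : d%:R != 0 :> algC by rewrite pnatr_eq0 -lt0n proj_assoc_dim_gt0.
pose mu y := \tr (Q y *m invmx (P y)) / d%:R.
have QE y : y \in D -> Q y = mu y *: P y.
  move=> Dy; have [a Ea] := proj_assoc_cent_scalar (proj_assoc_ratio_cent QA QP Dy).
  rewrite /mu Ea mxtrace_scalar -(mulr_natr a) mulfK // -mul_scalar_mx -Ea.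
  by rewrite mulmxKV // (proj_assoc_unit PA).
exists mu; split=> // [|y n Dy Nn|y Dy].
- apply: (scalemx_injl (nz_unit _ (unitmx1 _ _))).
  by rewrite scale1r -{1}(proj_assoc1 PA) -QE ?group1 // (proj_assoc1 QA).
- have Dny : (n * y)%g \in D by rewrite groupM // (subsetP sND).
  apply: (scalemx_injl (nz_unit _ (proj_assoc_unit PA Dny))).
  by rewrite -QE // QNl // (QP _ Nn) QE // -scalemxAr -PNl.
- apply: contra_neq (nz_unit _ (proj_assoc_unit QA Dy)) => mu0.
  by rewrite QE // mu0 scale0r.
Qed.

Lemma proj_assoc_scalar_similar Q : proj_assoc D theta Q ->
  exists mu : gT -> algC,
    [/\ mu 1%g = 1, forall y n, y \in D -> n \in N -> mu (n * y)%g = mu y,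
        {in D, forall y, mu y != 0} & scalar_similar D Q P mu].
Proof.
move=> QA; have [B B_unit PB] := proj_assoc_rsim PA QA.
have QBN : {in N, (fun x => B *m Q x *m invmx B) =1 P}.
  by move=> n Nn /=; rewrite -PB // mulmxK.
have [mu [mu1 muN mu_neq0 QBE]] :=
  proj_assoc_scalar_multiple (proj_assoc_conjmx B_unit QA) QBN.
exists mu; split=> //; exists B => // y Dy.
by rewrite scalemxAl scalemxAr -QBE // !mulmxA mulVmx // mul1mx mulmxKV.
Qed.

Lemma scalar_similar_unique Q mu1 mu2 :
  {in N, forall n, mu1 n = 1} -> {in N, forall n, mu2 n = 1} ->
  scalar_similar D Q P mu1 -> scalar_similar D Q P mu2 -> {in D, mu1 =1 mu2}.
Proof.
move=> mu1N mu2N [B1 B1_unit QE1] [B2 B2_unit QE2].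
have B12_cent n : n \in N -> B1 *m invmx B2 *m P n = P n *m (B1 *m invmx B2).
  move=> Nn; have := QE2 n (subsetP sND n Nn).
  rewrite QE1 ?(subsetP sND n Nn) // mu1N // mu2N // !scale1r => PnB.
  rewrite -mulmxA -[invmx B2 *m P n](mulmxK B2_unit) -PnB.
  by rewrite !mulmxA mulmxV // mul1mx.
have [a B12E] := proj_assoc_cent_scalar B12_cent.
have B1E : B1 = a *: B2 by rewrite -mul_scalar_mx -B12E mulmxKV.
have a_neq0 : a != 0.
  apply: contra_neq (unitmx_neq0 proj_assoc_dim_gt0 B1_unit) => a0.
  by rewrite B1E a0 scale0r.
move=> y Dy; have PyB2_unit : invmx B2 *m P y *m B2 \in unitmx.
  by rewrite !unitmx_mul unitmx_inv B2_unit (proj_assoc_unit PA).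
apply: (scalemx_injl (unitmx_neq0 proj_assoc_dim_gt0 PyB2_unit)).
rewrite -QE2 // QE1 //; congr (_ *: _).
rewrite B1E invmxZ; last by rewrite -B1E.
by rewrite -!scalemxAl -scalemxAr scalerA mulVf // scale1r.
Qed.

Lemma mu_of_spec x s : x \in 'N(N)%g -> x \in 'N(D)%g -> cfact theta x s = theta ->
  is_mu D N P x s (mu_of D N P x s).
Proof.
move=> nNx nDx theta_x; apply: epsilon_spec.
have [mu [mu1 muN mu_neq0 muE]] :=
  proj_assoc_scalar_similar (proj_assoc_mxact PA nNx nDx theta_x).
by exists mu.
Qed.

Lemma mu_ofE x s mu : x \in 'N(N)%g -> x \in 'N(D)%g -> cfact theta x s = theta ->
  is_mu D N P x s mu -> {in D, mu_of D N P x s =1 mu}.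
Proof.
move=> nNx nDx theta_x [mu1 muN _ muE].
have [nu1 nuN _ nuE] := mu_of_spec nNx nDx theta_x.
apply: scalar_similar_unique nuE muE => n Nn.
  by rewrite (lcoset_const_onN nuN).
by rewrite (lcoset_const_onN muN).
Qed.

End AssociatedProjectiveRepresentations.

Section Twist.

Variables (gT : finGroupType) (d : nat) (D N : {group gT}) (eps : gT -> algC).

Definition twist (P : gT -> 'M[algC]_d) : gT -> 'M[algC]_d := fun x => eps x *: P x.

Definition twist_factor (alpha : gT -> gT -> algC) : gT -> gT -> algC :=
  fun x y => eps x * eps y / eps (x * y)%g * alpha x y.

Hypothesis eps_neq0 : {in D, forall y, eps y != 0}.

Lemma factor_set_twist P alpha :
  factor_set D P alpha -> factor_set D (twist P) (twist_factor alpha).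
Proof.
move=> fs x y Dx Dy; rewrite /twist /twist_factor -scalemxAl -scalemxAr scalerA.
by rewrite fs // !scalerA [X in _ = X *: _]mulrAC divfK // eps_neq0 // groupM.
Qed.

Hypotheses (sND : N \subset D) (nND : D \subset 'N(N)%g) (eps1 : eps 1%g = 1)
  (epsN : forall y n, y \in D -> n \in N -> eps (n * y)%g = eps y).

Lemma eps_onN : {in N, forall n, eps n = 1}.
Proof. by move=> n Nn; rewrite (lcoset_const_onN epsN). Qed.

Lemma eps_rcoset y n : y \in D -> n \in N -> eps (y * n)%g = eps y.
Proof.
move=> Dy Nn; rewrite -(conjgKV y n) -conjgC epsN //.
by rewrite memJ_norm // groupV (subsetP nND).
Qed.

Lemma proj_assoc_twist (theta : 'CF(N)) P :
  proj_assoc D theta P -> proj_assoc D theta (twist P).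
Proof.
move=> [[PU [alpha fs]] PM PT PNl PNr]; rewrite /twist; split.
- split=> [x Dx|]; first by rewrite unitmxZ ?PU // unitfE eps_neq0.
  by exists (twist_factor alpha); apply: factor_set_twist.
- by move=> n m Nn Nm; rewrite !eps_onN ?groupM // !scale1r PM.
- by move=> n Nn; rewrite eps_onN // scale1r PT.
- by move=> n g Nn Dg; rewrite epsN // (eps_onN Nn) scale1r PNl // scalemxAr.
- by move=> n g Nn Dg; rewrite eps_rcoset // (eps_onN Nn) scale1r PNr // scalemxAl.
Qed.

Lemma is_mu_twist P x s mu : x \in 'N(N)%g -> x \in 'N(D)%g ->
  is_mu D N P x s mu ->
  is_mu D N (twist P) x s (fun y => mu y * s (eps (x * y * x^-1)%g) / eps y).
Proof.
move=> nNx nDx [mu1 muN mu_neq0 [B B_unit muE]].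
have cE y : (x * y * x^-1 = y ^ x^-1)%g by rewrite conjgE invgK mulgA.
have cD y : y \in D -> (x * y * x^-1)%g \in D by rewrite cE memJ_norm ?groupV.
split=> [|y n Dy Nn|y Dy|].
- by rewrite mulg1 mulgV eps1 rmorph1 mu1 !mul1r invr1.
- have -> : (x * (n * y) * x^-1 = (x * n * x^-1) * (x * y * x^-1))%g.
    by rewrite !cE conjMg.
  have Nn' : (x * n * x^-1)%g \in N by rewrite cE memJ_norm ?groupV.
  by rewrite epsN ?cD // (epsN Dy Nn) muN.
- by rewrite !mulf_neq0 ?invr_eq0 ?mu_neq0 ?fmorph_eq0 ?eps_neq0 ?cD.
exists B => // y Dy; rewrite /twist map_mxZ muE // -scalemxAr -scalemxAl !scalerA.
by rewrite mulrC divfK ?eps_neq0.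
Qed.

Lemma mu_of_twist (theta : 'CF(N)) P x s :
  theta \in irr N -> proj_assoc D theta P -> x \in 'N(N)%g -> x \in 'N(D)%g ->
  cfact theta x s = theta ->
  {in D, mu_of D N (twist P) x s =1
           (fun y => mu_of D N P x s y * s (eps (x * y * x^-1)%g) / eps y)}.
Proof.
move=> theta_irr PA nNx nDx theta_x.
apply: (mu_ofE sND nND theta_irr (proj_assoc_twist PA) nNx nDx theta_x).
exact: is_mu_twist nNx nDx (mu_of_spec sND nND theta_irr PA nNx nDx theta_x).
Qed.

End Twist.

Lemma rootOfUnity_twist_factor (gT : finGroupType) (D : {group gT}) eps alpha :
  {in D, forall x, rootOfUnity (eps x)} -> {in D &, forall x y, rootOfUnity (alpha x y)} ->
  {in D &, forall x y, rootOfUnity (twist_factor eps alpha x y)}.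
Proof.
move=> eps_root alpha_root x y Dx Dy.
apply/rootOfUnityM/alpha_root => //; apply/rootOfUnityM/rootOfUnityV/eps_root.
  exact/rootOfUnityM/eps_root/Dy/eps_root.
exact: groupM.
Qed.

Lemma cfAut_idfun (gT : finGroupType) (L : {group gT}) (phi : 'CF(L)) :
  cfAut (idfun : {rmorphism algC -> algC}) phi = phi.
Proof. by apply/cfunP => y; rewrite cfunE. Qed.

Lemma in_calH_idfun p : in_calH p (idfun : {rmorphism algC -> algC}).
Proof. by exists 0%N; left => xi n _ _ _; rewrite expn0 expr1. Qed.

Section TwistedPair.

Variables (p : nat) (gT : finGroupType) (G N : {group gT}) (theta : 'CF(N))
  (H M : {group gT}) (phi : 'CF(M)) (d d' : nat)
  (P : gT -> 'M[algC]_d) (P' : gT -> 'M[algC]_d').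
Hypothesis geP : ge_c p G theta H phi P P'.

Let nsNG : (N <| G)%g. Proof. by have [[[]]] := geP. Qed.
Let nsMH : (M <| H)%g. Proof. by have [[_ []]] := geP. Qed.
Let sHG : H \subset G. Proof. by have [[]] := geP. Qed.

Lemma ge_c_inertia : 'I_H[theta]%g = 'I_H[phi]%g.
Proof.
have [_ _ stab _ _] := geP.
apply/setP => h; rewrite !in_setI; apply: andb_id2l => Hh.
have := stab h _ Hh (in_calH_idfun p); rewrite /cfact !cfAut_idfun => stab_h.
move: (subsetP (normal_norm nsNG) h (subsetP sHG h Hh)).
move: (subsetP (normal_norm nsMH) h Hh).
by rewrite !inE => -> ->; apply/eqP/eqP => /stab_h.
Qed.

Let sND : N \subset 'I_G[theta]%g. Proof. exact/sub_Inertia/normal_sub. Qed.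
Let sMD : M \subset 'I_H[phi]%g. Proof. exact/sub_Inertia/normal_sub. Qed.
Let nND : 'I_G[theta]%g \subset 'N(N)%g. Proof. exact: norm_Inertia. Qed.
Let nMD : 'I_H[phi]%g \subset 'N(M)%g. Proof. exact: norm_Inertia. Qed.
Let sIHG : 'I_H[phi]%g \subset 'I_G[theta]%g.
Proof. by rewrite -ge_c_inertia setSI. Qed.
Let sMN : M \subset N.
Proof. by have [_ [_ NHM _] _ _ _] := geP; rewrite -NHM subsetIl. Qed.

Variable eps : gT -> algC.
Hypotheses (eps_root : {in 'I_G[theta]%g, forall x, rootOfUnity (eps x)})
  (epsN : forall x n, x \in 'I_G[theta]%g -> n \in N -> eps (n * x)%g = eps x)
  (eps1 : eps 1%g = 1).

Let eps_root' : {in 'I_H[phi]%g, forall x, rootOfUnity (eps x)}.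
Proof. by move=> x /(subsetP sIHG)/eps_root. Qed.
Let eps_neq0 : {in 'I_G[theta]%g, forall x, eps x != 0}.
Proof. by move=> x /eps_root/rootOfUnity_neq0. Qed.
Let eps_neq0' : {in 'I_H[phi]%g, forall x, eps x != 0}.
Proof. by move=> x /eps_root'/rootOfUnity_neq0. Qed.
Let epsM : forall x n, x \in 'I_H[phi]%g -> n \in M -> eps (n * x)%g = eps x.
Proof. by move=> x n /(subsetP sIHG) IGx /(subsetP sMN); apply: epsN. Qed.

Lemma ge_c_twist_assoc :
  proj_assoc 'I_G[theta]%g theta (twist eps P) /\
  proj_assoc 'I_H[phi]%g phi (twist eps P').
Proof.
have [_ _ _ [[PA PA'] _ _ _] _] := geP.
by split; [apply: proj_assoc_twist PA | apply: proj_assoc_twist PA'].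
Qed.

Lemma ge_c_twist_Qab :
  (forall x i j, x \in 'I_G[theta]%g -> in_Qab (twist eps P x i j)) /\
  (forall x i j, x \in 'I_H[phi]%g -> in_Qab (twist eps P' x i j)).
Proof.
have [_ _ _ [_ [P_Qab P'_Qab] _ _] _] := geP.
by split=> x i j Dx; rewrite mxE; apply: in_Qab_rootM; auto.
Qed.

Lemma ge_c_twist_factor_sets :
  exists alpha alpha',
    [/\ factor_set 'I_G[theta]%g (twist eps P) alpha,
        factor_set 'I_H[phi]%g (twist eps P') alpha',
        {in 'I_G[theta]%g &, forall x y, rootOfUnity (alpha x y)},
        {in 'I_H[phi]%g &, forall x y, rootOfUnity (alpha' x y)} &
        {in 'I_H[theta]%g &, forall x y, alpha x y = alpha' x y}].
Proof.
have [_ _ _ [_ _ [alpha [alpha' [fs fs' ra ra' agree]]] _] _] := geP.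
exists (twist_factor eps alpha), (twist_factor eps alpha'); split.
- exact: factor_set_twist.
- exact: factor_set_twist.
- exact: rootOfUnity_twist_factor.
- exact: rootOfUnity_twist_factor.
- by move=> x y Hx Hy; rewrite /twist_factor agree.
Qed.

Lemma ge_c_twist_center c : c \in 'C_G(N)%g ->
  exists lambda, twist eps P c = lambda%:M /\ twist eps P' c = lambda%:M.
Proof.
have [_ _ _ [_ _ _ P_center] _] := geP.
case/P_center=> lambda [Pc P'c]; exists (eps c * lambda).
by rewrite /twist Pc P'c !scale_scalar_mx.
Qed.

Lemma ge_c_twist_mu h s : h \in H -> in_calH p s -> cfact theta h s = theta ->
  {in 'I_H[theta]%g, mu_of 'I_G[theta]%g N (twist eps P) h s =1
                     mu_of 'I_H[phi]%g M (twist eps P') h s}.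
Proof.
move=> Hh s_calH theta_h y IHy.
have [[[_ theta_irr _] [_ phi_irr _] _] _ stab [[PA PA'] _ _ _] mu_agree] := geP.
have phi_h : cfact phi h s = phi by apply/(stab h s Hh s_calH).
have Gh := subsetP sHG h Hh.
have nNh := subsetP (normal_norm nsNG) h Gh.
have nMh := subsetP (normal_norm nsMH) h Hh.
have IGy : y \in 'I_G[theta]%g by apply: subsetP (setSI _ sHG) y IHy.
have IHy' : y \in 'I_H[phi]%g by rewrite -ge_c_inertia.
rewrite (mu_of_twist eps_neq0 sND nND eps1 epsN theta_irr PA nNh
          (cfact_norm_Inertia Gh nNh theta_h) theta_h IGy).
rewrite (mu_of_twist eps_neq0' sMD nMD eps1 epsM phi_irr PA' nMh
          (cfact_norm_Inertia Hh nMh phi_h) phi_h IHy').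
by rewrite /= mu_agree.
Qed.

End TwistedPair.

Theorem lemma1p6 (p : nat) (gT : finGroupType) (G N : {group gT}) (theta : 'CF(N))
  (H M : {group gT}) (phi : 'CF(M)) (d d' : nat)
  (P : gT -> 'M[algC]_d) (P' : gT -> 'M[algC]_d') (eps : gT -> algC) :
  prime p ->
  ge_c p G theta H phi P P' ->
  (forall x, x \in ('I_G[theta])%g -> rootOfUnity (eps x)) ->
  (forall x n, x \in ('I_G[theta])%g -> n \in N -> eps (n * x)%g = eps x) ->
  eps 1%g = 1 ->
  ge_c p G theta H phi (fun x => (eps x *: P x : 'M[algC]_d)%R) (fun x => (eps x *: P' x : 'M[algC]_d')%R).
Proof.
move=> _ geP eps_root epsN eps1.
have [triples subgroups stab _ _] := geP.
split=> //; last exact (ge_c_twist_mu geP eps_root epsN eps1).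
split.
- exact (ge_c_twist_assoc geP eps_root epsN eps1).
- exact (ge_c_twist_Qab geP eps_root).
- exact (ge_c_twist_factor_sets geP eps_root).
- exact (ge_c_twist_center geP eps).
Qed.
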